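(* Let $U\subset N$ be a coordinate chart with coordinates $(x^1,x^2)$ on a surface with projective structure $[\nabla]$, and on $U\times\mathbb{R}_2$ with fibre coordinates $(\xi_1,\xi_2)$ associate to each torsion-free connection $\nabla\in[\nabla]$ with Christoffel symbols $\Gamma^k_{ij}$ and Schouten tensor $\mathrm{P}_{ij}$ the metric $$g_\nabla=\left(d\xi_i-\left(\Gamma_{ij}^k \xi_k -\xi_i\xi_j-\mathrm{P}_{ji}\right)dx^j\right)\odot dx^i .$$ This metric does not depend on the choice of connection in the projective class: if $\hat\nabla\in[\nabla]$ is related to $\nabla$ by $\hat{\Gamma}^i_{jk}=\Gamma^i_{jk}+\delta^i_j\Upsilon_k+\delta^i_k\Upsilon_j$ for a $1$-form $\Upsilon$, and the fibre coordinates are changed by $\hat\xi_i=\xi_i+\Upsilon_i$, then $g_{\hat\nabla}$ written in the coordinates $(x^i,\hat\xi_i)$ coincides with $g_\nabla$ written in the coordinates $(x^i,\xi_i)$.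
   Context: A projective structure $[\nabla]$ on a surface $N$ is an equivalence class of torsion-free connections on $TN$ with the same unparametrised geodesics; two torsion-free connections are projectively equivalent iff their Christoffel symbols are related by $\hat{\Gamma}^i_{jk}=\Gamma^i_{jk}+\delta^i_j\Upsilon_k+\delta^i_k\Upsilon_j$ for some $1$-form $\Upsilon$. The curvature is defined by $[\nabla_i,\nabla_j]X^k=R_{ij}{}^k{}_lX^l$, and the (not necessarily symmetric) Schouten tensor $\mathrm{P}_{ij}$ is defined by the unique decomposition $R_{ij}{}^k{}_l=\delta_i{}^k\mathrm{P}_{jl}-\delta_j{}^k\mathrm{P}_{il}-2\mathrm{P}_{[ij]}\delta_l{}^k$. Indices run over $1,2$ with summation convention, and $\odot$ denotes the symmetric tensor product. The coordinates $\xi_i$ are affine fibre coordinates of (an affine chart in) the projectivised tractor bundle of $(N,[\nabla])$. *)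

From HB Require Import structures.
From mathcomp Require Import all_boot all_order all_algebra.
From mathcomp Require Import all_classical all_reals all_analysis.
Set Implicit Arguments. Unset Strict Implicit. Unset Printing Implicit Defensive.
Import Order.TTheory GRing.Theory Num.Theory.
Import numFieldNormedType.Exports.
Local Open Scope ring_scope.
Local Open Scope classical_set_scope.

Definition kdelta (R : realType) (i j : 'I_2) : R := (i == j)%:R.

Definition pd (R : realType) (f : 'rV[R]_2 -> R) (l : 'I_2) (x : 'rV[R]_2) : R :=
  'D_(delta_mx 0 l) f x.

(* Christoffel symbols: Gam k i j = Gamma^k_{ij}, so that
   nabla_i X^k = d_i X^k + Gamma^k_{ij} X^j.
   Curvature [nabla_i, nabla_j] X^k = R_{ij}^k_l X^l :
   R_{ij}^k_l = d_i Gamma^k_{jl} - d_j Gamma^k_{il}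
              + Gamma^k_{im} Gamma^m_{jl} - Gamma^k_{jm} Gamma^m_{il}. *)
Definition riem (R : realType) (Gam : 'I_2 -> 'I_2 -> 'I_2 -> 'rV[R]_2 -> R)
  (x : 'rV[R]_2) (i j k l : 'I_2) : R :=
  pd (Gam k j l) i x - pd (Gam k i l) j x
  + \sum_(m < 2) (Gam k i m x * Gam m j l x - Gam k j m x * Gam m i l x).

Definition is_schouten (R : realType) (U : set 'rV[R]_2)
  (Gam : 'I_2 -> 'I_2 -> 'I_2 -> 'rV[R]_2 -> R) (P : 'I_2 -> 'I_2 -> 'rV[R]_2 -> R) :=
  forall x, U x -> forall i j k l : 'I_2,
    riem Gam x i j k l
    = kdelta R i k * P j l x - kdelta R j k * P i l x - (P i j x - P j i x) * kdelta R l k.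

Definition torsion_free (R : realType) (U : set 'rV[R]_2)
  (Gam : 'I_2 -> 'I_2 -> 'I_2 -> 'rV[R]_2 -> R) :=
  forall x, U x -> forall k i j : 'I_2, Gam k i j x = Gam k j i x.

Definition proj_related (R : realType) (U : set 'rV[R]_2)
  (Gam Gh : 'I_2 -> 'I_2 -> 'I_2 -> 'rV[R]_2 -> R) (Ups : 'I_2 -> 'rV[R]_2 -> R) :=
  forall x, U x -> forall i j k : 'I_2,
    Gh i j k x = Gam i j k x + kdelta R i j * Ups k x + kdelta R i k * Ups j x.

(* Tangent vectors to U x R_2 at a point (x, xi): pairs (v.1, v.2) with
   v.1 0 i = dx^i(v) and v.2 0 i = dxi_i(v). *)
Definition tvec (R : realType) := ('rV[R]_2 * 'rV[R]_2)%type.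

Definition alpha (R : realType) (Gam : 'I_2 -> 'I_2 -> 'I_2 -> 'rV[R]_2 -> R)
  (P : 'I_2 -> 'I_2 -> 'rV[R]_2 -> R) (x xi : 'rV[R]_2) (i : 'I_2) (v : tvec R) : R :=
  v.2 0 i - \sum_(j < 2)
     ((\sum_(k < 2) Gam k i j x * xi 0 k) - xi 0 i * xi 0 j - P j i x) * v.1 0 j.

(* g_nabla = alpha_i (.) dx^i, with  a (.) b = (a (x) b + b (x) a)/2,
   evaluated at the point (x, xi) on the tangent vectors v, w. *)
Definition gmetric (R : realType) (Gam : 'I_2 -> 'I_2 -> 'I_2 -> 'rV[R]_2 -> R)
  (P : 'I_2 -> 'I_2 -> 'rV[R]_2 -> R) (x xi : 'rV[R]_2) (v w : tvec R) : R :=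
  \sum_(i < 2) (alpha Gam P x xi i v * w.1 0 i + alpha Gam P x xi i w * v.1 0 i) / 2.

Definition fibre_shift (R : realType) (Ups : 'I_2 -> 'rV[R]_2 -> R) (x xi : 'rV[R]_2)
  : 'rV[R]_2 := xi + \row_(i < 2) Ups i x.

Definition dfibre_shift (R : realType) (Ups : 'I_2 -> 'rV[R]_2 -> R) (x : 'rV[R]_2)
  (v : tvec R) : tvec R :=
  (v.1, v.2 + \row_(i < 2) \sum_(j < 2) pd (Ups i) j x * v.1 0 j).

From HB Require Import structures.
From mathcomp Require Import all_boot all_order all_algebra.
From mathcomp Require Import all_classical all_reals all_analysis.
From mathcomp Require Import ring lra.
Import Order.TTheory GRing.Theory Num.Theory.
Import numFieldNormedType.Exports.
Local Open Scope ring_scope.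
Local Open Scope classical_set_scope.

(* Under the change of connection and of fibre coordinates, the form
   alpha_i = dxi_i - (Gamma^k_ij xi_k - xi_i xi_j - P_ji) dx^j changes by
   T_ij dx^j with T_ij = nabla_j Ups_i - Ups_i Ups_j + Ph_ji - P_ji: the terms
   quadratic in xi and those in Ups_k xi cancel.  In dimension two the Schouten
   tensor is recovered from the contraction r_jl = R_kj^k_l = 2 P_jl - P_lj, and
   the classical transformation law of r under a projective change gives
   Ph_(ij) = P_(ij) - nabla_(i Ups_j) + Ups_i Ups_j for the symmetric parts.
   Hence T is skew, and it drops out of the symmetrised product alpha_i (.) dx^i. *)

Lemma sum_antisym_sym (R : numDomainType) (n : nat) (T c : 'I_n -> 'I_n -> R) :
  (forall i j, T i j = - T j i) -> (forall i j, c i j = c j i) ->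
  \sum_(i < n) \sum_(j < n) T i j * c i j = 0.
Proof.
move=> Tanti csym; set S := (X in X = 0).
have : S = - S.
  rewrite {1}/S exchange_big -sumrN; apply: eq_bigr => i _.
  by rewrite -sumrN; apply: eq_bigr => j _; rewrite Tanti csym mulNr.
by move/eqP; rewrite -subr_eq0 opprK -mulr2n mulrn_eq0 => /orP[//|/eqP->].
Qed.

Lemma ord2_cases (i : 'I_2) : i = ord0 \/ i = lift ord0 ord0.
Proof. by case: i => -[|[|//]] Hi; [left|right]; apply: val_inj. Qed.

Lemma kdeltaxx (R : realType) (i : 'I_2) : kdelta R i i = 1.
Proof. by rewrite /kdelta eqxx. Qed.

Lemma sum_kdeltal (R : realType) (j : 'I_2) (F : 'I_2 -> R) :
  \sum_(k < 2) kdelta R j k * F k = F j.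
Proof.
rewrite (bigD1 j) //= kdeltaxx mul1r big1 ?addr0 // => k.
by rewrite /kdelta eq_sym => /negbTE ->; rewrite mul0r.
Qed.

Definition ricci {R : realType} (Gam : 'I_2 -> 'I_2 -> 'I_2 -> 'rV[R]_2 -> R)
  (x : 'rV[R]_2) (j l : 'I_2) : R := \sum_(k < 2) riem Gam x k j k l.

Definition covd {R : realType} (Gam : 'I_2 -> 'I_2 -> 'I_2 -> 'rV[R]_2 -> R)
  (Ups : 'I_2 -> 'rV[R]_2 -> R) (x : 'rV[R]_2) (j i : 'I_2) : R :=
  pd (Ups i) j x - \sum_(k < 2) Gam k j i x * Ups k x.

Lemma schouten_ricci {R : realType} {U : set 'rV[R]_2}
    {Gam : 'I_2 -> 'I_2 -> 'I_2 -> 'rV[R]_2 -> R} {P : 'I_2 -> 'I_2 -> 'rV[R]_2 -> R} {x} :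
  is_schouten U Gam P -> U x -> forall j l, ricci Gam x j l = 2 * P j l x - P l j x.
Proof.
move=> hP Ux j l; rewrite /ricci.
under eq_bigr => k _ do rewrite hP // kdeltaxx mul1r (mulrC _ (kdelta R l k)).
by rewrite !sumrB sumr_const card_ord !sum_kdeltal; ring.
Qed.

Definition alpha_defect {R : realType} (Gam : 'I_2 -> 'I_2 -> 'I_2 -> 'rV[R]_2 -> R)
    (P Ph : 'I_2 -> 'I_2 -> 'rV[R]_2 -> R) (Ups : 'I_2 -> 'rV[R]_2 -> R)
    (x : 'rV[R]_2) (i j : 'I_2) : R :=
  covd Gam Ups x j i - Ups i x * Ups j x + Ph j i x - P j i x.

Section ProjectiveChange.

Context {R : realType} {U : set 'rV[R]_2} {x : 'rV[R]_2}.
Hypotheses (oU : open U) (Ux : U x).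
Context {Gam Gh : 'I_2 -> 'I_2 -> 'I_2 -> 'rV[R]_2 -> R}.
Context {P Ph : 'I_2 -> 'I_2 -> 'rV[R]_2 -> R} {Ups : 'I_2 -> 'rV[R]_2 -> R}.
Hypothesis dGam : forall k i j, differentiable (Gam k i j) x.
Hypothesis dUps : forall i, differentiable (Ups i) x.
Hypothesis tfGam : torsion_free U Gam.
Hypothesis rel : proj_related U Gam Gh Ups.

Lemma pd_eq_on_open (f g : 'rV[R]_2 -> R) l :
  (forall y, U y -> f y = g y) -> pd f l x = pd g l x.
Proof.
move=> fg; apply: near_eq_derive.
have : \forall y \near x, U y by apply: open_nbhs_nbhs.
by apply: filterS => y /fg.
Qed.

Lemma pd_proj_related i j k l : pd (Gh i j k) l x
  = pd (Gam i j k) l x + kdelta R i j * pd (Ups k) l x + kdelta R i k * pd (Ups j) l x.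
Proof.
rewrite (@pd_eq_on_open _ ((Gam i j k + kdelta R i j \*o Ups k) + kdelta R i k \*o Ups j));
  last by move=> y Uy; rewrite rel.
rewrite /pd !deriveD ?deriveMl //; apply: diff_derivable.
all: by repeat apply: differentiableD; try apply: differentiableM.
Qed.

Lemma ricci_proj_related j l : ricci Gh x j l
  = ricci Gam x j l - 2 * covd Gam Ups x j l + covd Gam Ups x l j + Ups j x * Ups l x.
Proof.
rewrite /ricci /riem /covd !big_ord_recl !big_ord0 /= !pd_proj_related !(rel x Ux).
have [->|->] := ord2_cases j; have [->|->] := ord2_cases l; rewrite /kdelta /=.
all: try rewrite !(tfGam x Ux _ (lift ord0 ord0) ord0).
all: ring.
Qed.

Lemma schouten_sym_proj_related : is_schouten U Gam P -> is_schouten U Gh Ph ->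
  forall j l, Ph j l x + Ph l j x
  = P j l x + P l j x - covd Gam Ups x j l - covd Gam Ups x l j + 2 * (Ups j x * Ups l x).
Proof.
move=> hP hPh j l.
have := schouten_ricci hP Ux j l; have := schouten_ricci hP Ux l j.
have := schouten_ricci hPh Ux j l; have := schouten_ricci hPh Ux l j.
rewrite !ricci_proj_related => *; lra.
Qed.

Lemma alpha_defect_antisym : is_schouten U Gam P -> is_schouten U Gh Ph ->
  forall i j, alpha_defect Gam P Ph Ups x i j = - alpha_defect Gam P Ph Ups x j i.
Proof.
move=> hP hPh i j; have := schouten_sym_proj_related hP hPh j i.
rewrite /alpha_defect => ?; lra.
Qed.

Lemma alpha_fibre_shift xi v i :
  alpha Gh Ph x (fibre_shift Ups x xi) i (dfibre_shift Ups x v)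
  = alpha Gam P x xi i v + \sum_(j < 2) alpha_defect Gam P Ph Ups x i j * v.1 0 j.
Proof.
rewrite /alpha /fibre_shift /dfibre_shift /alpha_defect /covd /= !mxE.
rewrite !big_ord_recl !big_ord0 /= !(rel x Ux) !mxE.
have [->|->] := ord2_cases i; rewrite /kdelta /=.
all: rewrite !(tfGam x Ux _ (lift ord0 ord0) ord0).
all: ring.
Qed.

Lemma gmetric_fibre_shift xi v w :
  gmetric Gh Ph x (fibre_shift Ups x xi) (dfibre_shift Ups x v) (dfibre_shift Ups x w)
  = gmetric Gam P x xi v w
    + (\sum_(i < 2) \sum_(j < 2)
         alpha_defect Gam P Ph Ups x i j * (v.1 0 j * w.1 0 i + w.1 0 j * v.1 0 i)) / 2.
Proof.
rewrite /gmetric; under eq_bigr => i _ do rewrite !alpha_fibre_shift.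
by rewrite !big_ord_recl !big_ord0 /=; ring.
Qed.

End ProjectiveChange.

Theorem theorem5p1 (R : realType) (U : set 'rV[R]_2) (hU : open U)
  (Gam Gh : 'I_2 -> 'I_2 -> 'I_2 -> 'rV[R]_2 -> R)
  (P Ph : 'I_2 -> 'I_2 -> 'rV[R]_2 -> R) (Ups : 'I_2 -> 'rV[R]_2 -> R)
  (dGam : forall k i j x, U x -> differentiable (Gam k i j) x)
  (dGh : forall k i j x, U x -> differentiable (Gh k i j) x)
  (dUps : forall i x, U x -> differentiable (Ups i) x)
  (tfGam : torsion_free U Gam)
  (rel : proj_related U Gam Gh Ups)
  (hP : is_schouten U Gam P) (hPh : is_schouten U Gh Ph) :
  forall x : 'rV[R]_2, U x -> forall (xi : 'rV[R]_2) (v w : tvec R),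
    gmetric Gh Ph x (fibre_shift Ups x xi) (dfibre_shift Ups x v) (dfibre_shift Ups x w)
    = gmetric Gam P x xi v w.
Proof.
move=> x Ux xi v w.
have dGam_x k i j := dGam k i j x Ux; have dUps_x i := dUps i x Ux.
rewrite (gmetric_fibre_shift (P := P) Ux tfGam rel) sum_antisym_sym ?mul0r ?addr0 //.
- exact: (alpha_defect_antisym hU Ux dGam_x dUps_x tfGam rel hP hPh).
- by move=> i j; ring.
Qed.
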